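(* Let $\mathbf{M}$ be a $D\times D$ unimodular matrix and $\bm{\Gamma}_1,\dots,\bm{\Gamma}_L$ nonsingular $D\times D$ integer matrices that are pairwise commutative and coprime; let $\mathbf{M}_i=\mathbf{M}\bm{\Gamma}_i$. Then $\mathbf{R}=\mathbf{M}\bm{\Gamma}_1\cdots\bm{\Gamma}_L\mathbf{U}$ is an lcrm of the $\mathbf{M}_i$ for every unimodular $\mathbf{U}$; with $\mathbf{W}_i=\mathbf{M}\bm{\Gamma}_1\cdots\bm{\Gamma}_{i-1}\bm{\Gamma}_{i+1}\cdots\bm{\Gamma}_L$, there exist integer matrices $\widehat{\mathbf{W}}_i,\mathbf{Q}_i$ with $\mathbf{W}_i\widehat{\mathbf{W}}_i+\mathbf{M}_i\mathbf{Q}_i=\mathbf{I}$ for each $i$, and for any such choice every $\mathbf{m}\in\mathcal{N}(\mathbf{R})$ satisfies $$\mathbf{m}=\Big\langle\sum_{i=1}^L\mathbf{W}_i\widehat{\mathbf{W}}_i\mathbf{r}_i\Big\rangle_{\mathbf{R}},\qquad \mathbf{r}_i=\langle\mathbf{m}\rangle_{\mathbf{M}_i}.$$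
   Context: All matrices are $D\times D$ integer matrices; unimodular means integer with determinant $\pm1$. Commuting nonsingular integer matrices are coprime if all their common left (equivalently right) divisors are unimodular, where $\mathbf{A}$ is a left divisor of $\mathbf{M}$ if $\mathbf{A}^{-1}\mathbf{M}$ is integer. An lcrm of $\mathbf{M}_1,\dots,\mathbf{M}_L$ is a nonsingular integer $\mathbf{R}=\mathbf{M}_i\mathbf{P}_i$ (integer $\mathbf{P}_i$, all $i$) such that every such common right multiple equals $\mathbf{R}\mathbf{A}$ for integer $\mathbf{A}$. $\mathcal{N}(\mathbf{M})=\{\mathbf{k}\in\mathbb{Z}^D:\mathbf{k}=\mathbf{M}\mathbf{x},\ \mathbf{x}\in[0,1)^D\}$; $\langle\mathbf{m}\rangle_{\mathbf{M}}$ is the unique $\mathbf{r}\in\mathcal{N}(\mathbf{M})$ with $\mathbf{m}-\mathbf{r}\in\mathbf{M}\mathbb{Z}^D$. *)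

From HB Require Import structures.
From mathcomp Require Import all_boot all_order all_algebra.
From Stdlib Require Import ClassicalEpsilon.
Set Implicit Arguments. Unset Strict Implicit. Unset Printing Implicit Defensive.
Import Order.TTheory GRing.Theory Num.Theory.
Local Open Scope ring_scope.

Definition ratmx (m n : nat) (A : 'M[int]_(m, n)) : 'M[rat]_(m, n) :=
  map_mx (fun z : int => z%:~R) A.

Definition unimodular (D : nat) (A : 'M[int]_D) : Prop :=
  \det A = 1 \/ \det A = -1.

Definition nonsingular (D : nat) (A : 'M[int]_D) : Prop := \det A != 0.

(* A is a left divisor of M : A^{-1} M is an integer matrix, i.e.
   M = A X for some integer matrix X (A nonsingular). *)
Definition left_divisor (D : nat) (A M : 'M[int]_D) : Prop :=
  nonsingular A /\ exists X : 'M[int]_D, M = A *m X.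

Definition mx_coprime (D : nat) (A B : 'M[int]_D) : Prop :=
  forall C : 'M[int]_D, left_divisor C A -> left_divisor C B -> unimodular C.

Definition common_right_multiple (D L : nat) (Ms : 'I_L -> 'M[int]_D)
  (S : 'M[int]_D) : Prop :=
  forall i, exists P : 'M[int]_D, S = Ms i *m P.

Definition is_lcrm (D L : nat) (Ms : 'I_L -> 'M[int]_D) (R : 'M[int]_D) : Prop :=
  nonsingular R /\ common_right_multiple Ms R /\
  forall S : 'M[int]_D, nonsingular S -> common_right_multiple Ms S ->
    exists A : 'M[int]_D, S = R *m A.

Definition in_N (D : nat) (M : 'M[int]_D) (k : 'cV[int]_D) : Prop :=
  exists x : 'cV[rat]_D,
    (forall i, 0 <= x i 0 /\ x i 0 < 1) /\ ratmx k = ratmx M *m x.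

Definition is_modrep (D : nat) (M : 'M[int]_D) (m r : 'cV[int]_D) : Prop :=
  in_N M r /\ exists z : 'cV[int]_D, m - r = M *m z.

Definition modrep (D : nat) (M : 'M[int]_D) (m : 'cV[int]_D) : 'cV[int]_D :=
  epsilon (inhabits 0) (is_modrep M m).

From HB Require Import structures.
From mathcomp Require Import all_boot all_order all_algebra.
From mathcomp Require Import lra zify.
From Stdlib Require Import ClassicalEpsilon.
Set Implicit Arguments.
Unset Strict Implicit.
Unset Printing Implicit Defensive.
Import Order.TTheory GRing.Theory Num.Theory.
Local Open Scope ring_scope.

(* Pairwise coprime matrices satisfy Bezout identities [A X + B Y = 1] (from
   the Smith normal form of [row_mx A B]).  When [A] and [B] commute, the
   coefficients can moreover be chosen in the commutative algebra generated by
   [A] and [B]: the polynomial [det (I - x X^T - y Y^T)] has constant term 1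
   and vanishes at [(A, B)] by the determinant trick.  With commuting
   coefficients, a matrix divisible on the left by [A] and by [B] is divisible
   by [A B]; hence [M Gam_1 ... Gam_L U] is the lcrm, and the [Gam_i] are
   comaximal with the product of the others, which gives the [W_i]-Bezout
   identities.  Finally [sum_i W_i Wh_i r_i] is congruent to [r_i], hence to
   [m], modulo every [M Gam_i], hence modulo the lcrm [R]; as [m] lies in
   [N(R)] it is the representative of that sum. *)

Lemma det_trick (S R : comPzRingType) n (h : {rmorphism S -> 'M[R]_n})
    (N : 'M[S]_n) :
  (forall j a, \sum_k h (N j k) a k = 0) -> h (\det N) = 0.
Proof.
move=> hN0; apply/matrixP => a i; rewrite mxE.
have adjN k : \sum_j h (\adj N i j) * h (N j k) = h (\det N) *+ (i == k).
  have := congr1 (fun P : 'M[S]_n => h (P i k)) (mul_adj_mx N).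
  rewrite !mxE rmorphMn rmorph_sum => <-.
  by apply: eq_bigr => j _; rewrite rmorphM.
transitivity (\sum_k (h (\det N) *+ (i == k)) a k).
  by rewrite (bigD1 i) //= eqxx big1 ?addr0 // => k /negbTE; rewrite eq_sym => ->; rewrite mxE.
under eq_bigr do rewrite -adjN summxE.
rewrite exchange_big big1 //= => j _.
under eq_bigr do rewrite -mulmxE mxE.
by rewrite exchange_big big1 //= => b _; rewrite -mulr_sumr hN0 mulr0.
Qed.

Lemma polyC_coef0_addMX (R : nzRingType) (p : {poly R}) :
  p = (p`_0)%:P + drop_poly 1 p * 'X.
Proof.
rewrite -{1}(poly_take_drop 1 p) expr1; congr (_ + _).
by apply/polyP => i; rewrite coef_take_poly coefC; case: i.
Qed.

Section CommutingBezout.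
Variables (R : comNzRingType) (n : nat) (A B X Y : 'M[R]_n.+1).
Hypotheses (cAB : comm_mx A B) (bezAB : A *m X + B *m Y = 1%:M).

Let ev : {rmorphism {poly {poly R}} -> 'M[R]_n.+1} :=
  horner_morph (fun p => comm_mx_horner p cAB).

Let evX : ev 'X = A. Proof. exact: horner_morphX. Qed.
Let evY : ev 'Y = B. Proof. by rewrite /ev /= horner_morphC; exact: horner_mx_X. Qed.
Let evCC c : ev c%:P%:P = c%:M.
Proof. by rewrite /ev /= horner_morphC; exact: horner_mx_C. Qed.

Let comm_mx_ev p : comm_mx (ev p) A /\ comm_mx (ev p) B.
Proof.
have evC q : ev p * ev q = ev q * ev p by rewrite -!rmorphM mulrC.
by split; rewrite /comm_mx mulmxE; [rewrite -evX | rewrite -evY].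
Qed.

(* [I - x X^T - y Y^T]: its determinant has constant term 1 and vanishes at (A, B). *)
Let N : 'M[{poly {poly R}}]_n.+1 := \matrix_(j, k)
  (((1%:M : 'M[R]_n.+1) k j)%:P%:P - (X k j)%:P%:P * 'X - (Y k j)%:P%:P * 'Y).

Let ev_det_N : ev (\det N) = 0.
Proof.
apply: det_trick => j a.
have -> : \sum_k ev (N j k) a k = (1%:M *m 1%:M - (A *m X + B *m Y)) a j.
  rewrite !mxE -big_split -sumrB; apply: eq_bigr => k _ /=.
  rewrite /N mxE !rmorphB !rmorphM evX evY !evCC -!mulmxE !mul_scalar_mx /= !mxE.
  by rewrite mulr_natl (mulrC (X k j)) (mulrC (Y k j)) opprD addrA.
by rewrite bezAB mulmx1 subrr mxE.
Qed.

Let det_N_coef00 : (\det N)`_0`_0 = 1.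
Proof.
rewrite -[_`_0]/(coefp 0 _) -[(\det N)`_0]/(coefp 0 _) -!det_map_mx -[RHS](det1 _ n.+1).
congr (\det _); apply/matrixP => j k; rewrite !mxE /=.
by rewrite !(coefB, coef0M, coefC, coefX) /= !(mulr0, subr0) eq_sym.
Qed.

Lemma comm_mx_bezoutS : exists P Q : 'M[R]_n.+1,
  A *m P + B *m Q = 1%:M /\
  [/\ comm_mx P A, comm_mx P B, comm_mx Q A & comm_mx Q B].
Proof.
set f := \det N; set q1 := drop_poly 1 f; set q2 := drop_poly 1 f`_0.
have def_f : f = 1 + q2%:P * 'Y + q1 * 'X.
  by rewrite {1}[f]polyC_coef0_addMX {1}[f`_0]polyC_coef0_addMX det_N_coef00 polyCD polyCM.
have [cq1A cq1B] := comm_mx_ev q1; have [cq2A cq2B] := comm_mx_ev q2%:P.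
exists (- ev q1), (- ev q2%:P); split; last by split; apply/comm_mx_sym/comm_mxN/comm_mx_sym.
have := ev_det_N; rewrite -/f def_f !rmorphD !rmorphM rmorph1 evX evY.
rewrite -!mulmxE cq1A cq2B -addrA addrC => /eqP; rewrite addr_eq0 => /eqP eq_sum.
by rewrite !mulmxN -opprD addrC eq_sum opprK idmxE.
Qed.

End CommutingBezout.

Lemma comm_mx_bezout (R : comNzRingType) n (A B X Y : 'M[R]_n) :
  comm_mx A B -> A *m X + B *m Y = 1%:M ->
  exists P Q : 'M[R]_n, A *m P + B *m Q = 1%:M /\
    [/\ comm_mx P A, comm_mx P B, comm_mx Q A & comm_mx Q B].
Proof.
case: n => [|n] in A B X Y *; last exact: comm_mx_bezoutS.
by move=> _ _; exists 0, 0; split; [apply/matrixP => -[] | split; exact: comm0mx].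
Qed.

Section CommutingProducts.
Variables (R : comNzRingType) (n : nat) (I : eqType) (F : I -> 'M[R]_n).

Lemma comm_mx_big_mulmx (G : 'M[R]_n) (s : seq I) (P : pred I) :
  (forall j, P j -> comm_mx G (F j)) ->
  comm_mx G (\big[mulmx/1%:M]_(j <- s | P j) F j).
Proof. by move=> cGF; apply: big_ind => //; [apply: comm_mx1 | apply: comm_mxM]. Qed.

Lemma big_mulmxD1 (s : seq I) i : uniq s -> i \in s ->
  (forall j, comm_mx (F i) (F j)) ->
  \big[mulmx/1%:M]_(j <- s) F j = F i *m \big[mulmx/1%:M]_(j <- s | j != i) F j.
Proof.
move=> + + cFi; elim: s => //= a s IHs /andP[a_notin_s uniq_s].
rewrite !big_cons inE; case: (eqVneq i a) => [-> _ | neq_ia /= i_in_s].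
  rewrite /= -[in RHS]big_filter (_ : [seq j <- s | j != a] = s) //.
  by apply/all_filterP/allP => j j_in_s; apply: contraNneq a_notin_s => <-.
by rewrite (IHs uniq_s i_in_s) !mulmxA cFi.
Qed.

Lemma bezout_big_mulmx (G : 'M[R]_n) (s : seq I) :
  (forall j, j \in s -> comm_mx G (F j)) ->
  (forall j, j \in s -> exists X Y : 'M[R]_n, G *m X + F j *m Y = 1%:M) ->
  exists X Y : 'M[R]_n, G *m X + (\big[mulmx/1%:M]_(j <- s) F j) *m Y = 1%:M.
Proof.
elim: s => [|a s IHs] cGF bezGF.
  by exists 0, 1%:M; rewrite big_nil mulmx0 add0r mulmx1.
have [X1 [Y1 bez1]] := bezGF a (mem_head a s).
have [X2 [Y2 bez2]] : exists X Y, G *m X + (\big[mulmx/1%:M]_(j <- s) F j) *m Y = 1%:M.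
  by apply: IHs => j j_in_s; [apply: cGF | apply: bezGF]; rewrite inE j_in_s orbT.
set W := \big[mulmx/1%:M]_(j <- s) F j in bez2 *.
exists (X1 + F a *m X2 *m Y1), (Y2 *m Y1).
rewrite big_cons -/W mulmxDr -addrA.
have -> : G *m (F a *m X2 *m Y1) + F a *m W *m (Y2 *m Y1) = F a *m (G *m X2 + W *m Y2) *m Y1.
  by rewrite mulmxDr mulmxDl !mulmxA (cGF a (mem_head a s)).
by rewrite bez2 mulmx1 bez1.
Qed.

Lemma big_mulmx_ldvd k (s : seq I) (T : 'M[R]_(n, k)) : uniq s ->
  (forall i j, comm_mx (F i) (F j)) ->
  (forall i j, i != j -> exists X Y : 'M[R]_n, F i *m X + F j *m Y = 1%:M) ->
  (forall i, i \in s -> exists B, T = F i *m B) ->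
  exists A, T = (\big[mulmx/1%:M]_(j <- s) F j) *m A.
Proof.
move=> + cF bezF; elim: s => [|a s IHs] /=.
  by move=> _ _; exists T; rewrite big_nil mul1mx.
case/andP=> a_notin_s uniq_s FT.
have [A' eqT'] : exists A, T = (\big[mulmx/1%:M]_(j <- s) F j) *m A.
  by apply: IHs => // j j_in_s; apply: FT; rewrite inE j_in_s orbT.
have [B eqT] := FT a (mem_head a s).
set W := \big[mulmx/1%:M]_(j <- s) F j in eqT' *.
have cFaW : comm_mx (F a) W by apply: comm_mx_big_mulmx.
have [X [Y bezFaW]] : exists X Y : 'M[R]_n, F a *m X + W *m Y = 1%:M.
  apply: bezout_big_mulmx => j j_in_s; first exact: cF.
  by apply: bezF; apply: contraNneq a_notin_s => ->.
have [P [Q [bezPQ [_ cPW cQFa _]]]] := comm_mx_bezout cFaW bezFaW.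
(* [T = (F a P + W Q) T], and each summand is divisible by [F a W] *)
exists (Q *m B + P *m A').
rewrite big_cons -/W mulmxDr -{1}[T]mul1mx -bezPQ mulmxDl addrC.
congr (_ + _).
  by rewrite eqT !mulmxA -(mulmxA W) cQFa mulmxA -cFaW.
by rewrite eqT' !mulmxA -(mulmxA (F a) P) cPW mulmxA.
Qed.

End CommutingProducts.

Lemma int_row_mx_gcld m n (A : 'M[int]_m) (B : 'M[int]_(m, n)) :
  exists (C : 'M[int]_m) (A' : 'M[int]_m) (B' : 'M[int]_(m, n))
         (X : 'M[int]_m) (Y : 'M[int]_(n, m)),
    [/\ A = C *m A', B = C *m B' & A *m X + B *m Y = C].
Proof.
have [L _ [R uR [d _ defK]]] := int_Smith_normal_form (row_mx A B).
set S := \matrix_(i, j) _ in defK.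
have defS : S = row_mx (lsubmx S) 0.
  rewrite -[S in LHS]hsubmxK; congr row_mx; apply/matrixP => i j; rewrite !mxE /=.
  by rewrite ltn_eqF ?mulr0n // ltn_addr.
set C := L *m lsubmx S.
have defAB : row_mx A B = C *m usubmx R.
  by rewrite defK defS -[R in _ *m R]vsubmxK mul_mx_row mulmx0 mul_row_col mul0mx addr0.
set XY := invmx R *m col_mx 1%:M 0.
exists C, (lsubmx (usubmx R)), (rsubmx (usubmx R)), (usubmx XY), (dsubmx XY).
have [eqA eqB] : A = C *m lsubmx (usubmx R) /\ B = C *m rsubmx (usubmx R).
  by apply/eq_row_mx; rewrite -mul_mx_row hsubmxK.
split=> //; rewrite -mul_row_col vsubmxK.
by rewrite /XY defK mulmxA mulmxK // defS mul_mx_row mulmx0 mul_row_col mulmx1 mul0mx addr0.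
Qed.

Lemma unimodular_unitmx D (C : 'M[int]_D) : unimodular C -> C \in unitmx.
Proof. by rewrite unitmxE; case=> ->; rewrite ?unitrN unitr1. Qed.

Lemma unimodular_nonsingular D (C : 'M[int]_D) : unimodular C -> nonsingular C.
Proof. by rewrite /nonsingular; case=> ->; rewrite ?oppr_eq0 oner_eq0. Qed.

Lemma nonsingular_mul D (A B : 'M[int]_D) :
  nonsingular A -> nonsingular B -> nonsingular (A *m B).
Proof. by rewrite /nonsingular det_mulmx; apply: mulf_neq0. Qed.

Lemma nonsingular_big_mulmx D (I : Type) (s : seq I) (P : pred I) (F : I -> 'M[int]_D) :
  (forall j, P j -> nonsingular (F j)) ->
  nonsingular (\big[mulmx/1%:M]_(j <- s | P j) F j).
Proof.
move=> nsF; apply: big_ind => //; last exact: nonsingular_mul.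
by rewrite /nonsingular det1 oner_eq0.
Qed.

Lemma mx_coprime_bezout D (A B : 'M[int]_D) : nonsingular A -> mx_coprime A B ->
  exists X Y : 'M[int]_D, A *m X + B *m Y = 1%:M.
Proof.
move=> nsA copAB; have [C [A' [B' [X [Y [eqA eqB bezC]]]]]] := int_row_mx_gcld A B.
have nsC : nonsingular C.
  by apply: contra nsA => /eqP detC0; rewrite eqA det_mulmx detC0 mul0r.
have uC : C \in unitmx.
  by apply/unimodular_unitmx/copAB; split=> //; [exists A' | exists B'].
by exists (X *m invmx C), (Y *m invmx C); rewrite !mulmxA -mulmxDl bezC mulmxV.
Qed.

Lemma ratmxM m n p (A : 'M[int]_(m, n)) (B : 'M[int]_(n, p)) :
  ratmx (A *m B) = ratmx A *m ratmx B.
Proof. exact: map_mxM. Qed.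

Lemma ratmxB m n (A B : 'M[int]_(m, n)) : ratmx (A - B) = ratmx A - ratmx B.
Proof. exact: map_mxB. Qed.

Lemma nonsingular_ratmx D (R : 'M[int]_D) : nonsingular R -> ratmx R \in unitmx.
Proof. by rewrite /nonsingular unitmxE det_map_mx unitfE intr_eq0. Qed.

Lemma in_N_eq D (R : 'M[int]_D) r r' z : nonsingular R ->
  in_N R r -> in_N R r' -> r - r' = R *m z -> r = r'.
Proof.
move=> /nonsingular_ratmx uR [x [x01 defr]] [x' [x'01 defr']] eqz.
have defz : ratmx z = x - x'.
  by apply: (can_inj (mulKmx uR)); rewrite -ratmxM -eqz ratmxB defr defr' mulmxBr.
have z0 : z = 0.
  apply/matrixP => i j; rewrite [j]ord1 mxE.
  have := congr1 (fun v : 'cV[rat]_D => v i 0) defz; rewrite !mxE => defzi.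
  have [[x0 x1] [x'0 x'1]] := (x01 i, x'01 i).
  have lt_z1 : z i 0 < 1 by rewrite -(ltr_int rat) defzi; lra.
  have gt_zN1 : -1 < z i 0 by rewrite -(ltr_int rat) defzi; lra.
  lia.
by apply/eqP; rewrite -subr_eq0 eqz z0 mulmx0.
Qed.

Lemma is_modrep_exists D (R : 'M[int]_D) m :
  nonsingular R -> exists r, is_modrep R m r.
Proof.
move=> /nonsingular_ratmx uR; set x := invmx (ratmx R) *m ratmx m.
set z : 'cV[int]_D := \col_i Num.floor (x i 0).
exists (m - R *m z); split; last by exists z; rewrite opprB addrC subrK.
exists (x - ratmx z); split; last by rewrite ratmxB ratmxM mulmxBr mulKVmx.
move=> i; rewrite !mxE subr_ge0 floor_le ltrBlDr; split=> //.
by rewrite addrC -[1](rmorph1 (intr : {rmorphism int -> rat})) -rmorphD floorD1_gt.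
Qed.

Lemma modrepP D (R : 'M[int]_D) m : nonsingular R -> is_modrep R m (modrep R m).
Proof. by move=> nsR; apply: epsilon_spec; apply: is_modrep_exists. Qed.

Lemma modrep_eq D (R : 'M[int]_D) m r :
  nonsingular R -> is_modrep R m r -> modrep R m = r.
Proof.
move=> nsR [rN [z eqz]]; have [modrepN [z' eqz']] := modrepP m nsR.
apply: (in_N_eq (R := R) (z := z - z')) => //.
by rewrite mulmxBr -eqz -eqz' opprB [RHS]addrC [RHS]addrA subrK.
Qed.

Section Corollary.
Variables (D L : nat) (M : 'M[int]_D) (Gam : 'I_L -> 'M[int]_D).
Hypotheses (uM : unimodular M) (nsGam : forall i, nonsingular (Gam i))
  (cGam : forall i j, Gam i *m Gam j = Gam j *m Gam i)
  (copGam : forall i j, i != j -> mx_coprime (Gam i) (Gam j)).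

Local Notation Gprod := (\big[mulmx/1%:M]_(i < L) Gam i).
Local Notation Gcof i := (\big[mulmx/1%:M]_(j < L | j != i) Gam j).

Let unitM : M \in unitmx := unimodular_unitmx uM.

Lemma big_Gam_ldvd k (T : 'M[int]_(D, k)) :
  (forall i, exists B, T = Gam i *m B) -> exists A, T = Gprod *m A.
Proof.
move=> GamT; apply: big_mulmx_ldvd (index_enum_uniq _) cGam _ _ => [i j neq_ij|i _].
  exact: mx_coprime_bezout (nsGam i) (copGam neq_ij).
exact: GamT.
Qed.

Lemma Gprod_Gcof i : Gprod = Gam i *m Gcof i.
Proof. exact: big_mulmxD1 (index_enum_uniq _) (mem_index_enum i) (cGam i). Qed.

Lemma lcrm_Gprod U : unimodular U -> is_lcrm (fun i => M *m Gam i) (M *m Gprod *m U).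
Proof.
move=> uU; split.
  apply: nonsingular_mul; last exact: unimodular_nonsingular.
  apply: nonsingular_mul; first exact: unimodular_nonsingular.
  exact: nonsingular_big_mulmx.
split=> [i | S _ dvdS].
  by exists (Gcof i *m U); rewrite (Gprod_Gcof i) !mulmxA.
have [A eqA] : exists A, invmx M *m S = Gprod *m A.
  by apply: big_Gam_ldvd => i; have [B ->] := dvdS i; exists B; rewrite mulmxA mulKmx.
exists (invmx U *m A).
by rewrite mulmxA mulmxK ?unimodular_unitmx // -mulmxA -eqA mulKVmx.
Qed.

Lemma Gcof_bezout i : exists Wh Q : 'M[int]_D,
  (M *m Gcof i) *m Wh + (M *m Gam i) *m Q = 1%:M.
Proof.
have [X [Y bezXY]] : exists X Y : 'M[int]_D,
    Gam i *m X + \big[mulmx/1%:M]_(j <- [seq j <- index_enum 'I_L | j != i]) Gam j *m Y = 1%:M.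
  apply: bezout_big_mulmx => j; rewrite mem_filter => /andP[neq_ji _]; first exact: cGam.
  by apply: mx_coprime_bezout (nsGam i) (copGam _); rewrite eq_sym.
exists (Y *m invmx M), (X *m invmx M).
by rewrite -big_filter !mulmxA -!mulmxDl -!(mulmxA M) -mulmxDr addrC bezXY mulmx1 mulmxV.
Qed.

Lemma Gcof_D1 i j : j != i ->
  Gcof j = Gam i *m \big[mulmx/1%:M]_(k < L | (k != j) && (k != i)) Gam k.
Proof.
move=> neq_ji; rewrite -big_filter_cond -[LHS]big_filter.
rewrite (big_mulmxD1 (filter_uniq _ (index_enum_uniq _)) _ (cGam i)) //.
by rewrite mem_filter eq_sym neq_ji mem_index_enum.
Qed.

Lemma modrep_crt (Wh Q : 'I_L -> 'M[int]_D) U m :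
  (forall i, (M *m Gcof i) *m Wh i + (M *m Gam i) *m Q i = 1%:M) ->
  unimodular U -> in_N (M *m Gprod *m U) m ->
  m = modrep (M *m Gprod *m U)
             (\sum_(i < L) (M *m Gcof i) *m Wh i *m modrep (M *m Gam i) m).
Proof.
move=> bezWQ uU mN; set s := \sum_(i < L) _.
have nsR : nonsingular (M *m Gprod *m U).
  apply: nonsingular_mul; last exact: unimodular_nonsingular.
  apply: nonsingular_mul; first exact: unimodular_nonsingular.
  exact: nonsingular_big_mulmx.
have Gam_dvd i : exists B, invmx M *m (m - s) = Gam i *m B.
  have nsMi : nonsingular (M *m Gam i).
    by apply: nonsingular_mul; [exact: unimodular_nonsingular | exact: nsGam].
  have [_ [z eqz]] := modrepP m nsMi.
  set ri := modrep (M *m Gam i) m in eqz *.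
  pose S' := \sum_(j < L | j != i)
    \big[mulmx/1%:M]_(k < L | (k != j) && (k != i)) Gam k *m Wh j *m modrep (M *m Gam j) m.
  have eq_i : M *m Gcof i *m Wh i *m ri = ri - M *m Gam i *m (Q i *m ri).
    by rewrite (canRL (addrK _) (bezWQ i)) mulmxBl mul1mx mulmxA.
  have eq_S' : \sum_(j < L | j != i) M *m Gcof j *m Wh j *m modrep (M *m Gam j) m
      = M *m Gam i *m S'.
    rewrite mulmx_sumr; apply: eq_bigr => j neq_ji.
    by rewrite (Gcof_D1 neq_ji) !mulmxA.
  have eq_ms : m - s = M *m Gam i *m (z + Q i *m ri - S').
    rewrite /s (bigD1 i) //= eq_i eq_S' mulmxBr mulmxDr -eqz.
    by rewrite opprD opprB addrA; congr (_ - _); rewrite addrCA addrC.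
  by exists (z + Q i *m ri - S'); rewrite eq_ms -mulmxA mulKmx.
have [A eqA] := big_Gam_ldvd Gam_dvd.
symmetry; apply: modrep_eq => //; split=> //; exists (- (invmx U *m A)).
rewrite mulmxN mulmxA mulmxK ?unimodular_unitmx // -mulmxA -eqA mulKVmx //.
by rewrite opprB.
Qed.

End Corollary.

Theorem corollary3 (D L : nat) (M : 'M[int]_D) (Gam : 'I_L -> 'M[int]_D) :
  unimodular M ->
  (forall i, nonsingular (Gam i)) ->
  (forall i j, Gam i *m Gam j = Gam j *m Gam i) ->
  (forall i j, i != j -> mx_coprime (Gam i) (Gam j)) ->
  let Ms := fun i => M *m Gam i in
  let Ws := fun i => M *m \big[mulmx/1%:M]_(j < L | j != i) Gam j in
  (forall U : 'M[int]_D, unimodular U ->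
     is_lcrm Ms (M *m \big[mulmx/1%:M]_(i < L) Gam i *m U))
  /\ (forall i, exists Wh Q : 'M[int]_D, Ws i *m Wh + Ms i *m Q = 1%:M)
  /\ (forall (Wh Q : 'I_L -> 'M[int]_D),
        (forall i, Ws i *m Wh i + Ms i *m Q i = 1%:M) ->
        forall U : 'M[int]_D, unimodular U ->
        let R := M *m \big[mulmx/1%:M]_(i < L) Gam i *m U in
        forall m : 'cV[int]_D, in_N R m ->
          m = modrep R (\sum_(i < L) Ws i *m Wh i *m modrep (Ms i) m)).
Proof.
move=> uM nsGam cGam copGam Ms Ws; split; first exact: lcrm_Gprod.
split; first exact: Gcof_bezout.
by move=> Wh Q bezWQ U uU R m; apply: (modrep_crt uM nsGam cGam copGam bezWQ uU).
Qed.
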